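(* Every forest (in particular every tree) of order $n$ has at most $2^{n/2}$ independent dominating sets. Moreover, there are infinitely many trees $T$ such that, with $n$ the order of $T$, $T$ has at least $\frac{1}{2}2^{n/2}$ independent dominating sets.
   Context: An independent dominating set of $G=(V,E)$ is a set $D\subseteq V$ with no edge inside $D$ such that every vertex outside $D$ has at least one neighbour in $D$. Order = number of vertices. *)

From mathcomp Require Import all_boot.
Set Implicit Arguments. Unset Strict Implicit. Unset Printing Implicit Defensive.

Definition simple_graph (T : finType) (e : rel T) : Prop :=
  symmetric e /\ irreflexive e.

Definition acyclic (T : finType) (e : rel T) : Prop :=
  forall c : seq T, 3 <= size c -> ~~ ucycleb e c.

Definition forest (T : finType) (e : rel T) : Prop :=
  simple_graph e /\ acyclic e.

Definition tree (T : finType) (e : rel T) : Prop :=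
  forest e /\ 0 < #|T| /\ (forall x y : T, connect e x y).

Definition ids_b (T : finType) (e : rel T) (D : {set T}) : bool :=
  [forall x, forall y, (x \in D) && (y \in D) ==> ~~ e x y] &&
  [forall x, (x \notin D) ==> [exists y, (y \in D) && e x y]].

Definition num_ids (T : finType) (e : rel T) : nat :=
  #|[set D : {set T} | ids_b e D]|.

From mathcomp Require Import all_boot zify.
Set Implicit Arguments. Unset Strict Implicit. Unset Printing Implicit Defensive.

(* We count the independent dominating sets of every induced
   subgraph G[S] of a forest and prove  ids(S)^2 <= 2^|S|  by strong induction
   on |S|.  If S spans no edge, S itself is its only independent dominating set.
   Otherwise the end of a longest simple path in G[S] is a pendant vertex v with
   unique S-neighbour u (a second neighbour would close a cycle).  An independent
   dominating set D of G[S] either contains v, and then D \ v is one for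
   S \ {v, u}, or avoids v, and then u is in D and D \ u is one for S \ N[u].
   Both maps are injective, so ids(S) <= ids(S \ {v,u}) + ids(S \ N[u]), and
   since both subsets have at most |S| - 2 vertices, (b + c)^2 <= 2(b^2 + c^2)
   gives the bound.  The "spider" with a hub, one leaf at the hub and k arms of
   length two is a tree of order 2k + 2; choosing for each arm its middle or its
   end vertex, together with the leaf at the hub, gives 2^k distinct independent
   dominating sets, i.e. at least half of 2^{n/2}. *)

Lemma sq_le_of_le_add a b c P :
  a <= b + c -> b ^ 2 <= P -> c ^ 2 <= P -> a ^ 2 <= 4 * P.
Proof.
move=> abc bP cP.
have sq_a : a ^ 2 <= (b + c) ^ 2 by rewrite leq_exp2r.
have amgm : 2 * (b * c) <= b ^ 2 + c ^ 2 by rewrite (nat_Cauchy b c).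
rewrite sqrnD in sq_a; lia.
Qed.

(* Removing a common element x is injective on a family of sets all containing
   x, so a family mapped into B this way is no larger than B. *)
Lemma card_le_by_removal (T : finType) (A B : {set {set T}}) (x : T) :
  (forall D, D \in A -> x \in D /\ D :\ x \in B) -> #|A| <= #|B|.
Proof.
move=> AB; rewrite -(card_in_imset (f := fun D => D :\ x)).
  by apply: subset_leq_card; apply/subsetP => _ /imsetP[D /AB[_ DxB] ->].
by move=> D1 D2 /AB[xD1 _] /AB[xD2 _] E; rewrite -(setD1K xD1) E setD1K.
Qed.

Section InducedSubgraphs.
Variables (T : finType) (e : rel T).

Definition ids_in (S D : {set T}) : bool :=
  [&& D \subset S, [forall x, forall y, (x \in D) && (y \in D) ==> ~~ e x y] &
      [forall x, (x \in S) && (x \notin D) ==> [exists y, (y \in D) && e x y]]].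

Definition nids_in (S : {set T}) : nat := #|[set D | ids_in S D]|.

Lemma ids_inP (S D : {set T}) :
  reflect [/\ D \subset S, forall x y, x \in D -> y \in D -> ~~ e x y &
             forall x, x \in S -> x \notin D -> exists2 y, y \in D & e x y]
          (ids_in S D).
Proof.
apply: (iffP and3P) => [[sDS /forallP indep /forallP dom] | [sDS indep dom]].
  split=> // [x y xD yD | x xS xD].
    by move: (indep x) => /forallP /(_ y); rewrite xD yD.
  by move: (dom x); rewrite xS xD => /existsP[y /andP[yD exy]]; exists y.
split=> //.
  by apply/forallP => x; apply/forallP => y; apply/implyP => /andP[]; exact: indep.
apply/forallP => x; apply/implyP => /andP[xS xD].
by have [y yD exy] := dom x xS xD; apply/existsP; exists y; rewrite yD.
Qed.

Lemma num_ids_nids_in : num_ids e = nids_in [set: T].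
Proof.
apply: eq_card => D; rewrite !inE /ids_b /ids_in subsetT /=.
by congr (_ && _); apply: eq_forallb => x; rewrite in_setT.
Qed.

Lemma nids_in_edgeless (S : {set T}) :
  (forall x y, x \in S -> y \in S -> ~~ e x y) -> nids_in S <= 1.
Proof.
move=> noedge; rewrite -(cards1 S); apply: subset_leq_card; apply/subsetP => D.
rewrite !inE => /ids_inP[sDS _ dom]; apply/eqP/setP => x.
apply/idP/idP => [/(subsetP sDS) // | xS]; apply: contraT => xD.
have [y yD exy] := dom x xS xD.
by move: (noedge x y xS (subsetP sDS y yD)); rewrite exy.
Qed.

Definition pendant (S : {set T}) (v u : T) : Prop :=
  [/\ v \in S, u \in S, e v u & forall y, y \in S -> e v y -> y = u].

Hypothesis e_sym : symmetric e.

Lemma pendant_dominated (S D : {set T}) v u :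
  pendant S v u -> ids_in S D -> v \notin D -> u \in D.
Proof.
move=> [vS _ _ only_u] /ids_inP[sDS _ dom] vD.
by have [y yD evy] := dom v vS vD; rewrite -(only_u y (subsetP sDS y yD) evy).
Qed.

Lemma card_ids_with_pendant (S : {set T}) v u : pendant S v u ->
  #|[set D | ids_in S D] :&: [set D : {set T} | v \in D]| <= nids_in (S :\: [set v; u]).
Proof.
move=> [vS uS evu only_u]; apply: (card_le_by_removal (x := v)) => D.
rewrite !inE => /andP[/ids_inP[sDS indep dom] vD]; split=> //.
apply/ids_inP; split.
- apply/subsetP => z; rewrite !inE => /andP[zv zD].
  rewrite (negbTE zv) (subsetP sDS z zD) andbT /=; apply/eqP => zu.
  by move: (indep v z vD zD); rewrite zu evu.
- by move=> a b; rewrite !inE => /andP[_ aD] /andP[_ bD]; apply: indep.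
- move=> z; rewrite !inE => /andP[/norP[zv zu] zS]; rewrite zv /= => zD.
  have [y yD ezy] := dom z zS zD; exists y => //; rewrite in_setD1 yD andbT.
  apply/eqP => yv; move: ezy; rewrite yv e_sym => /(only_u z zS) /eqP.
  by rewrite (negbTE zu).
Qed.

Lemma card_ids_without_pendant (S : {set T}) v u : pendant S v u ->
  #|[set D | ids_in S D] :\: [set D : {set T} | v \in D]|
    <= nids_in (S :\: (u |: [set y | e u y])).
Proof.
move=> pvu; apply: (card_le_by_removal (x := u)) => D.
rewrite !inE => /andP[vD idsD]; have uD := pendant_dominated pvu idsD vD.
move/ids_inP: idsD => [sDS indep dom]; split=> //.
apply/ids_inP; split.
- apply/subsetP => z; rewrite !inE => /andP[zu zD].
  by rewrite (negbTE zu) (subsetP sDS z zD) (indep u z uD zD).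
- by move=> a b; rewrite !inE => /andP[_ aD] /andP[_ bD]; apply: indep.
- move=> z; rewrite !inE => /andP[/norP[zu nuz] zS]; rewrite zu /= => zD.
  have [y yD ezy] := dom z zS zD; exists y => //; rewrite in_setD1 yD andbT.
  by apply/eqP => yu; move: ezy; rewrite yu e_sym (negbTE nuz).
Qed.

Lemma nids_in_pendant (S : {set T}) v u : pendant S v u ->
  nids_in S <= nids_in (S :\: [set v; u]) + nids_in (S :\: (u |: [set y | e u y])).
Proof.
move=> pvu; rewrite /nids_in -(cardsID [set D : {set T} | v \in D]).
by apply: leq_add; [apply: card_ids_with_pendant | apply: card_ids_without_pendant].
Qed.

Hypotheses (e_irr : irreflexive e) (e_acyclic : acyclic e).

Lemma no_chord x w q1 y q2 :
  path e x (w :: q1 ++ y :: q2) -> uniq (x :: w :: q1 ++ y :: q2) -> ~~ e y x.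
Proof.
move=> pth unq; apply/negP => eyx.
have := e_acyclic (c := x :: w :: rcons q1 y).
rewrite /= size_rcons => /(_ isT) /negP; apply; apply/andP; split.
  rewrite /cycle.
  rewrite rcons_path -rcons_cons rcons_path last_rcons eyx andbT.
  by move: pth; rewrite -cat_cons cat_path => /andP[-> /andP[]].
by move: unq; rewrite -cat_rcons -!cat_cons cat_uniq => /andP[].
Qed.

Lemma extend_or_pendant (S : {set T}) x w q :
  path e x (w :: q) -> uniq (x :: w :: q) -> all (mem S) (x :: w :: q) ->
  pendant S x w \/ exists y, [/\ y \in S, e y x & y \notin x :: w :: q].
Proof.
move=> pth unq /and3P[xS wS _].
have [y /and3P[yS exy ynw] | only_w] :=
  pickP [pred y | [&& y \in S, e x y & y != w]]; last first.
  left; split=> //; first by case/andP: pth.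
  move=> y yS exy; apply/eqP; apply: contraFT (only_w y) => ynw.
  by rewrite /= yS exy ynw.
right; exists y; split=> //; first by rewrite e_sym.
have ynx : y != x by apply: contraTneq exy => ->; rewrite e_irr.
rewrite !inE (negbTE ynx) (negbTE ynw) /=; apply/negP => yq.
case/splitPr: yq pth unq => q1 q2 pth unq.
by move: (no_chord pth unq); rewrite e_sym exy.
Qed.

(* Extending a simple path as long as possible ends at a pendant vertex. *)
Lemma pendant_of_path (S : {set T}) x w q :
  path e x (w :: q) -> uniq (x :: w :: q) -> all (mem S) (x :: w :: q) ->
  exists v u, pendant S v u.
Proof.
have [k] := ubnP (#|T| - size q); elim: k x w q => // k IH x w q ltk pth unq inS.
have [pxw | [y [yS eyx ynew]]] := extend_or_pendant pth unq inS; first by exists x, w.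
have unq' : uniq (y :: x :: w :: q) by rewrite cons_uniq ynew unq.
have size_le : size (y :: x :: w :: q) <= #|T|.
  by rewrite -(card_uniqP unq'); apply: max_card.
apply: (IH y x (w :: q)); rewrite /= ?eyx ?pth ?yS //.
by move: ltk size_le => /=; lia.
Qed.

Lemma pendant_exists (S : {set T}) x w :
  x \in S -> w \in S -> e x w -> exists v u, pendant S v u.
Proof.
move=> xS wS exw; apply: (@pendant_of_path S x w [::]); rewrite /= ?xS ?wS ?exw //.
by rewrite inE andbT; apply: contraTneq exw => ->; rewrite e_irr.
Qed.

Lemma nids_in_sq_bound (S : {set T}) : nids_in S ^ 2 <= 2 ^ #|S|.
Proof.
have [n] := ubnP #|S|; elim: n S => // n IH S ltSn.
have [x /existsP[w /and3P[xS wS exw]] | noedge] :=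
  pickP [pred x | [exists w, [&& x \in S, w \in S & e x w]]]; last first.
  have : nids_in S <= 1.
    apply: nids_in_edgeless => x y xS yS.
    by move: (noedge x) => /negbT/existsPn/(_ y); rewrite xS yS.
  by case: (nids_in S) => [|[|]] //; rewrite expn_gt0.
have [v [u pvu]] := pendant_exists xS wS exw.
have [vS uS evu _] := pvu.
set Sv := S :\: [set v; u]; set Su := S :\: (u |: [set y | e u y]).
have card_Sv : #|Sv| + 2 = #|S|.
  have vu : v != u by apply: contraTneq evu => ->; rewrite e_irr.
  have sub : [set v; u] \subset S by rewrite subUset !sub1set vS uS.
  by rewrite -(cardsID [set v; u] S) (setIidPr sub) cards2 vu addnC.
have card_Su : #|Su| <= #|Sv|.
  apply/subset_leq_card/subsetP => z; rewrite !inE => /andP[/norP[zu nuz] zS].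
  by rewrite zS (negbTE zu) andbT orbF; apply: contraNneq nuz => ->; rewrite e_sym.
have IHv : nids_in Sv ^ 2 <= 2 ^ #|Sv| by apply: IH; lia.
have IHu : nids_in Su ^ 2 <= 2 ^ #|Sv|.
  by apply: leq_trans (IH Su _) _; [lia | rewrite leq_exp2l].
rewrite -card_Sv expnD mulnC.
exact: sq_le_of_le_add (nids_in_pendant pvu) IHv IHu.
Qed.

End InducedSubgraphs.

Lemma forest_ids_bound (T : finType) (e : rel T) :
  forest e -> num_ids e ^ 2 <= 2 ^ #|T|.
Proof.
move=> [[e_sym e_irr] e_acyclic].
by rewrite num_ids_nids_in -cardsT; apply: nids_in_sq_bound.
Qed.

Lemma cycle_two_neighbours (T : eqType) (e : rel T) (c : seq T) x :
  symmetric e -> cycle e c -> uniq c -> 3 <= size c -> x \in c ->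
  exists y z, [/\ y \in c, z \in c, y != z, e x y & e x z].
Proof.
move=> e_sym cyc unq size_c xc; exists (next c x), (prev c x).
rewrite mem_next mem_prev xc next_cycle // e_sym prev_cycle //; split=> //.
have [i c' rot_c] := rot_to xc.
rewrite -(next_rot i unq) -(prev_rot i unq) rot_c.
have unq' : uniq (x :: c') by rewrite -rot_c rot_uniq.
have size_c' : 3 <= size (x :: c') by rewrite -rot_c size_rot.
case: c' unq' size_c' {rot_c} => [|a [|b r]] // unq' _; apply/eqP => next_prev_x.
have := next_prev unq' x; rewrite -next_prev_x.
move: unq'; rewrite /= !inE => /andP[/norP[xa /norP[xb _]] _].
by rewrite eqxx eq_sym (negbTE xa) eqxx => bx; move: xb; rewrite bx eqxx.
Qed.

Lemma off_cycle (T : eqType) (e : rel T) (c : seq T) x w :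
  symmetric e -> cycle e c -> uniq c -> 3 <= size c ->
  (forall y, y \in c -> e x y -> y = w) -> x \notin c.
Proof.
move=> e_sym cyc unq size_c only_w; apply/negP => xc.
have [y [z [yc zc yz exy exz]]] := cycle_two_neighbours e_sym cyc unq size_c xc.
by move: yz; rewrite (only_w y yc exy) (only_w z zc exz) eqxx.
Qed.

Section Spider.
Variable k : nat.

(* The spider with k arms: the hub [None], a leaf [Some None] at the hub, and
   for each arm i a middle vertex [mid i] adjacent to the hub and an end vertex
   [foot i] adjacent to [mid i]. *)
Local Notation vertex := (option (option ('I_k * bool))).
Local Notation hub := (None : vertex).
Local Notation tip := (Some None : vertex).
Local Notation mid i := (Some (Some (i, true)) : vertex).
Local Notation foot i := (Some (Some (i, false)) : vertex).

Definition spider_arc (x y : vertex) : bool :=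
  match x, y with
  | None, Some None => true
  | None, Some (Some (_, true)) => true
  | Some (Some (i, true)), Some (Some (j, false)) => i == j
  | _, _ => false
  end.

Definition spider_edge : rel vertex := fun x y => spider_arc x y || spider_arc y x.

Lemma spider_sym : symmetric spider_edge.
Proof. by move=> x y; rewrite /spider_edge orbC. Qed.

Lemma spider_irr : irreflexive spider_edge.
Proof. by case=> [[[i []]|]|]. Qed.

(* Peeling leaves: ends and the tip are leaves, then the middles have only the
   hub left on a cycle, and then the hub has no neighbour left on it. *)
Lemma spider_acyclic : acyclic spider_edge.
Proof.
move=> c size_c; apply/negP => /andP[cyc unq].
have off := off_cycle spider_sym cyc unq size_c.
have foot_off i : foot i \notin c.
  by apply: (off _ (mid i)) => -[[[j []]|]|] //= _ /eqP ->.
have tip_off : tip \notin c by apply: (off _ hub) => -[[[j []]|]|].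
have mid_off i : mid i \notin c.
  apply: (off _ hub) => -[[[j []]|]|] //= jc /orP[] // /eqP eq_ij.
  by move: jc; rewrite -eq_ij (negbTE (foot_off i)).
have hub_off : hub \notin c.
  apply: (off _ hub) => -[[[j []]|]|] //= yc _.
    by move: yc; rewrite (negbTE (mid_off j)).
  by move: yc; rewrite (negbTE tip_off).
have : nth hub c 0 \in c by apply: mem_nth; apply: leq_trans size_c.
case: (nth hub c 0) => [[[j []]|]|]; apply/negP;
  by [apply: mid_off | apply: foot_off | apply: tip_off | apply: hub_off].
Qed.

Lemma spider_connected (x y : vertex) : connect spider_edge x y.
Proof.
have to_hub (z : vertex) : connect spider_edge z hub.
  case: z => [[[j []]|]|]; try exact: connect1; last exact: connect0.
  by apply: (connect_trans (y := mid j)); apply: connect1; rewrite /spider_edge /= ?eqxx ?orbT.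
by apply: connect_trans (to_hub x) _; rewrite (sym_connect_sym spider_sym).
Qed.

Lemma spider_tree : tree spider_edge.
Proof.
split; first by split; [split; [exact: spider_sym | exact: spider_irr] | exact: spider_acyclic].
by split; [rewrite !card_option | exact: spider_connected].
Qed.

Lemma card_spider : #|{: vertex}| = k.*2.+2.
Proof. by rewrite !card_option card_prod card_ord card_bool muln2. Qed.

Definition arm_choice (f : {ffun 'I_k -> bool}) : {set vertex} :=
  [set x | match x with
           | None => false
           | Some None => true
           | Some (Some (i, b)) => b == f i
           end].

Lemma arm_choice_inj : injective arm_choice.
Proof.
move=> f g E; apply/ffunP => i.
have := congr1 (fun D : {set vertex} => mid i \in D) E; rewrite /= !inE.
by case: (f i); case: (g i).
Qed.

Lemma arm_choice_ids f : ids_b spider_edge (arm_choice f).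
Proof.
apply/andP; split.
  apply/forallP => x; apply/forallP => y; apply/implyP; rewrite !inE.
  case: x => [[[i []]|]|]; case: y => [[[j []]|]|] //=; rewrite /spider_edge /= ?orbF //.
  - by case: (i =P j) => // ->; case: (f _).
  - by rewrite andbF.
  - by case: (j =P i) => // ->; case: (f _).
apply/forallP => x; apply/implyP; rewrite inE.
case: x => [[[i []]|]|] //= notin.
- apply/existsP; exists (foot i); rewrite inE /spider_edge /= eqxx /= andbT.
  by move: notin; case: (f i).
- apply/existsP; exists (mid i); rewrite inE /spider_edge /= ?eqxx /= ?orbT ?andbT.
  by move: notin; case: (f i).
- by apply/existsP; exists tip; rewrite inE.
Qed.

Lemma spider_num_ids : 2 ^ k <= num_ids spider_edge.
Proof.
have -> : 2 ^ k = #|arm_choice @: [set: {ffun 'I_k -> bool}]|.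
  by rewrite (card_imset _ arm_choice_inj) cardsT card_ffun card_bool card_ord.
by apply/subset_leq_card/subsetP => _ /imsetP[f _ ->]; rewrite inE arm_choice_ids.
Qed.

End Spider.

Theorem mainTheorem17 :
  (forall (T : finType) (e : rel T), forest e -> num_ids e ^ 2 <= 2 ^ #|T|) /\
  (forall N : nat, exists (T : finType) (e : rel T),
      tree e /\ N <= #|T| /\ 2 ^ #|T| <= (2 * num_ids e) ^ 2).
Proof.
split; first exact: forest_ids_bound.
move=> N; exists (option (option ('I_N * bool))), (spider_edge (k := N)).
split; first exact: spider_tree.
rewrite card_spider; split; first by rewrite -addnn; lia.
have order_sq : 2 ^ N.*2.+2 = (2 * 2 ^ N) ^ 2.
  by rewrite expnMn -expnM -expnD; congr (2 ^ _); lia.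
by rewrite order_sq leq_exp2r // leq_mul2l spider_num_ids.
Qed.
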